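(* Let $(\Omega,\mathcal{F},P)=([0,1],\mathcal{B}([0,1]),\lambda)$ with $\lambda$ Lebesgue measure. For $n\in\mathbb{N}$ and $\varepsilon_n\in(0,1)$ define $S^n_1(\omega)=-\frac{1}{\sqrt{\omega}}$ for $\omega\in[0,\varepsilon_n)$ and $S^n_1(\omega)=\frac{1}{(1-\omega)^{1/(n+1)}}$ for $\omega\in[\varepsilon_n,1]$. Then the sequence $(\varepsilon_n)\subset(0,1)$ can be chosen such that $E[S^n_1]=1$ for all $n\in\mathbb{N}$ and $\varepsilon_n\to0$ as $n\to\infty$. *)

From HB Require Import structures.
From mathcomp Require Import all_boot all_order all_algebra.
From mathcomp Require Import all_classical all_reals all_analysis.
Set Implicit Arguments. Unset Strict Implicit. Unset Printing Implicit Defensive.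
Import Order.TTheory GRing.Theory Num.Theory.
Local Open Scope ring_scope.

Definition S1 {R : realType} (n : nat) (eps : R) (w : R) : R :=
  if w < eps then - (1 / Num.sqrt w)
  else 1 / ((1 - w) `^ (1 / (n%:R + 1))).

From HB Require Import structures.
From mathcomp Require Import all_boot all_order all_algebra.
From mathcomp Require Import all_classical all_reals all_analysis.
From mathcomp Require Import ring lra measurable_realfun.
Import Order.TTheory GRing.Theory Num.Theory.
Import numFieldNormedType.Exports.
Local Open Scope classical_set_scope.
Local Open Scope ring_scope.

(* For p < 1 and 0 < e < 1, the function equal to -1/sqrt w on [0, e[ and to
   (1 - w)^(-p) on [e, 1] has integral (1 - e)^(1-p)/(1-p) - 2 sqrt e. Both
   pieces are improper integrals: exhaust the half-open interval by compact
   subintervals, apply the fundamental theorem of calculus there, and pass to the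
   limit by monotone convergence. For p = 1/(n+1) this mean is 1 + 1/n > 1 at
   e = 0 and at most 2 - 3/2 at e = 9/16, so the intermediate value theorem gives
   e_n with mean 1. As (1 - e_n)^(1-p) <= 1, at that root
   2 sqrt e_n <= p/(1-p) <= 2p, hence e_n <= p^2 <= 1/(n+1), which tends to 0. *)

Section improper_FTC.
Context {R : realType}.
Notation mu := (@lebesgue_measure R).

Lemma ge0_integral_bigcup_cvg (f : R -> R) (A : (set R)^nat) (v : R^nat) (l : R) :
  nondecreasing_seq A -> (forall i, measurable (A i)) ->
  (forall i, measurable_fun (A i) f) -> (forall i x, A i x -> 0 <= f x) ->
  (forall i, (\int[mu]_(x in A i) (f x)%:E = (v i)%:E)%E) -> v @ \oo --> l ->
  (\int[mu]_(x in \bigcup_i A i) (f x)%:E = l%:E)%E.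
Proof.
move=> ndA mA mf f0 Av vl.
have cvgI : (\int[mu]_(x in A i) (f x)%:E)%E @[i --> \oo] -->
            (\int[mu]_(x in \bigcup_i A i) (f x)%:E)%E.
  apply: (@ge0_nondecreasing_set_cvg_integral _ (measurableTypeR R)) => // i.
  by apply/measurable_EFinP; exact: mf.
apply: (cvg_unique _ cvgI) => //=; under eq_fun do rewrite Av.
by apply: cvg_EFin; [exact: nearW | exact: vl].
Qed.

Lemma continuous_FTC2_is_derive (f F : R -> R) (a b : R) : a < b ->
  {in `[a, b], continuous f} ->
  {in `[a, b], forall x : R, is_derive x (1 : R) F (f x)} ->
  (\int[mu]_(x in `[a, b]) (f x)%:E = (F b - F a)%:E)%E.
Proof.
move=> ab cf dF.
have dFab : {in `[a, b], forall x : R, derivable F x 1} by move=> x /dF [].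
have /(continuous_within_itvP _ ab)[_ Fa Fb] := derivable_within_continuous dFab.
rewrite EFinB; apply: continuous_FTC2 => //.
- by apply: continuous_in_subspaceT => x /[!inE] /cf.
- by split=> // x xab; apply: dFab; exact: subset_itv_oo_cc.
- by move=> x /subset_itv_oo_cc /dF dFx; rewrite derive1E derive_val.
Qed.

Lemma scaled_harmonic {d : R} : 0 < d ->
  [/\ forall i, 0 < d * harmonic i <= d,
      nonincreasing_seq (fun i => d * harmonic i)
    & d * harmonic i @[i --> \oo] --> 0].
Proof.
move=> d0; split.
- move=> i; rewrite mulr_gt0 ?harmonic_gt0//= ler_piMr ?(ltW d0)//.
  by rewrite invf_le1 ?ltr0n// ler1n.
- move=> i j ij; rewrite ler_wpM2l ?(ltW d0)//.
  by rewrite lef_pV2 ?posrE ?ltr0n// ler_nat ltnS.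
- by have := cvgM (cvg_cst d) (@cvg_harmonic R); rewrite mulr0; apply.
Qed.

Lemma ge0_continuous_FTC2oc (f F : R -> R) (a b : R) : a < b ->
  {in `]a, b], forall x, 0 <= f x} -> {in `]a, b], continuous f} ->
  {in `]a, b], forall x : R, is_derive x (1 : R) F (f x)} ->
  F x @[x --> a^'+] --> F a ->
  (\int[mu]_(x in `]a, b]) (f x)%:E = (F b - F a)%:E)%E.
Proof.
move=> ab f0 cf dF Fa.
have d0 : 0 < (b - a) / 2 by rewrite divr_gt0 ?subr_gt0.
have [t_bnd t_noninc t0] := scaled_harmonic d0.
pose c i := a + (b - a) / 2 * harmonic i.
have cab i : a < c i < b.
  by have := t_bnd i; rewrite /c; set t := _ * _ => /andP[? ?]; apply/andP; lra.
have ca : c i @[i --> \oo] --> a.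
  by rewrite -[a in _ --> a]addr0; apply: cvgD; [exact: cvg_cst | exact: t0].
have sub i : `[c i, b] `<=` `]a, b].
  by apply: subset_itvr; rewrite bnd_simp; case/andP: (cab i).
have U : \bigcup_i [set` `[c i, b]] = [set` `]a, b]].
  apply/seteqP; split=> [x [i _ /sub]//|x].
  rewrite /= in_itv/= => /andP[ax xb].
  have [N _ cx] := cvgr_lt _ ca _ ax.
  by exists N => //=; rewrite in_itv/= xb andbT ltW//; apply: cx => /=.
rewrite -U; apply: (ge0_integral_bigcup_cvg _ _ (fun i => F b - F (c i))).
- move=> i j ij; apply/subsetPset/subset_itvr.
  by rewrite bnd_simp /c lerD2l t_noninc.
- by move=> i; exact: measurable_itv.
- move=> i; apply: subspace_continuous_measurable_fun => //.
  by apply: continuous_in_subspaceT => x /[!inE] /sub; exact: cf.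
- by move=> i x /sub; exact: f0.
- move=> i; apply: continuous_FTC2_is_derive; first by case/andP: (cab i).
  + by move=> x /sub; exact: cf.
  + by move=> x /sub; exact: dF.
- apply: cvgB; first exact: cvg_cst.
  have ac i : a < c i by case/andP: (cab i).
  exact: (cvg_at_rightP F a (F a)).1 Fa c (conj ac ca).
Qed.

Lemma ge0_continuous_FTC2co (f F : R -> R) (a b : R) : a < b ->
  {in `[a, b[, forall x, 0 <= f x} -> {in `[a, b[, continuous f} ->
  {in `[a, b[, forall x : R, is_derive x (1 : R) F (f x)} ->
  F x @[x --> b^'-] --> F b ->
  (\int[mu]_(x in `[a, b[) (f x)%:E = (F b - F a)%:E)%E.
Proof.
move=> ab f0 cf dF Fb.
have d0 : 0 < (b - a) / 2 by rewrite divr_gt0 ?subr_gt0.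
have [t_bnd t_noninc t0] := scaled_harmonic d0.
pose c i := b - (b - a) / 2 * harmonic i.
have cab i : a < c i < b.
  by have := t_bnd i; rewrite /c; set t := _ * _ => /andP[? ?]; apply/andP; lra.
have cb : c i @[i --> \oo] --> b.
  by rewrite -[b in _ --> b]subr0; apply: cvgB; [exact: cvg_cst | exact: t0].
have sub i : `[a, c i] `<=` `[a, b[.
  by apply: subset_itvl; rewrite bnd_simp; case/andP: (cab i).
have U : \bigcup_i [set` `[a, c i]] = [set` `[a, b[].
  apply/seteqP; split=> [x [i _ /sub]//|x].
  rewrite /= in_itv/= => /andP[ax xb].
  have [N _ cx] := cvgr_gt _ cb _ xb.
  by exists N => //=; rewrite in_itv/= ax ltW//; apply: cx => /=.
rewrite -U; apply: (ge0_integral_bigcup_cvg _ _ (fun i => F (c i) - F a)).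
- move=> i j ij; apply/subsetPset/subset_itvl.
  by rewrite bnd_simp /c lerD2l lerN2 t_noninc.
- by move=> i; exact: measurable_itv.
- move=> i; apply: subspace_continuous_measurable_fun => //.
  by apply: continuous_in_subspaceT => x /[!inE] /sub; exact: cf.
- by move=> i x /sub; exact: f0.
- move=> i; apply: continuous_FTC2_is_derive; first by case/andP: (cab i).
  + by move=> x /sub; exact: cf.
  + by move=> x /sub; exact: dF.
- apply: cvgB; last exact: cvg_cst.
  have cb' i : c i < b by case/andP: (cab i).
  exact: (cvg_at_leftP F b (F b)).1 Fb c (conj cb' cb).
Qed.
End improper_FTC.

Section blowup_integrals.
Context {R : realType}.
Notation mu := (@lebesgue_measure R).

Lemma is_derive_onem_powR (q x : R) : x < 1 ->
  is_derive x 1 (fun y => (1 - y) `^ q) (- (q * (1 - x) `^ (q - 1))).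
Proof.
move=> x1.
have hg : is_derive x 1 (fun y : R => 1 - y) (-1).
  by rewrite -[X in is_derive _ _ _ X]sub0r; apply: is_deriveB.
have hf : is_derive (1 - x) 1 (fun a : R => a `^ q) (q * (1 - x) `^ (q - 1)).
  by apply: is_derive1_powR; rewrite subr_gt0.
have := @is_derive1_comp R (fun a => a `^ q) (fun y => 1 - y) _ _ _ hf hg.
by rewrite mulrN1.
Qed.

Lemma measurable_inv_sqrt :
  measurable_fun (`[0, +oo[ : set R) (fun w : R => 1 / Num.sqrt w).
Proof.
apply: (eq_measurable_fun (fun w => w `^ (- 2^-1))).
  by move=> w; rewrite inE/= in_itv/= andbT => w0; rewrite powRN powR12_sqrt// div1r.
exact: measurable_funS (measurable_powR _).
Qed.

Lemma measurable_inv_onem_powR (p : R) :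
  measurable_fun [set: R] (fun w : R => 1 / (1 - w) `^ p).
Proof.
apply: (eq_measurable_fun (fun w : R => (1 - w) `^ (- p))) => [w _|].
  by rewrite powRN div1r.
by apply: measurableT_comp (measurable_powR _) _; exact: measurable_funB.
Qed.

Lemma inv_sqrt_continuous (x : R) : 0 < x ->
  {for x, continuous (fun w => 1 / Num.sqrt w)}.
Proof.
move=> x0.
have -> : (fun w : R => 1 / Num.sqrt w) = (fun w => (Num.sqrt w)^-1).
  by apply/funext => w; rewrite div1r.
by apply: continuousV; [rewrite sqrtr_eq0 -ltNge | exact: sqrt_continuous].
Qed.

Lemma integral_inv_sqrt (e : R) : 0 < e ->
  (\int[mu]_(x in `[0%R, e[) (1 / Num.sqrt x)%:E = (2 * Num.sqrt e)%:E)%E.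
Proof.
move=> e0.
have mf : measurable_fun `]0, e[ (EFin \o fun w : R => 1 / Num.sqrt w).
  apply/measurable_EFinP; apply: measurable_funS measurable_inv_sqrt => //.
  by apply: subset_itv; rewrite bnd_simp.
rewrite -integral_itv_obnd_cbnd // integral_itv_bndo_bndc //.
have -> : 2 * Num.sqrt e = 2 * Num.sqrt e - 2 * Num.sqrt 0.
  by rewrite sqrtr0 mulr0 subr0.
apply: (ge0_continuous_FTC2oc _ (fun x => 2 * Num.sqrt x)) => //.
- by move=> x /[!in_itv] /andP[x0 _]; exact: inv_sqrt_continuous.
- move=> x /[!in_itv] /andP[x0 _].
  apply: (is_derive_eq (f' := 2 *: (2 * Num.sqrt x)^-1)).
    by apply: is_deriveZ; exact: is_derive1_sqrt.
  by rewrite invfM /GRing.scale/= mulrA mulfV ?pnatr_eq0// mul1r div1r.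
- apply: cvg_at_right_filter.
  by apply: cvgM; [exact: cvg_cst | exact: sqrt_continuous].
Qed.

Lemma integral_inv_onem_powR (p e : R) : p < 1 -> e < 1 ->
  (\int[mu]_(x in `[e, 1%R]) (1 / (1 - x) `^ p)%:E
    = ((1 - e) `^ (1 - p) / (1 - p))%:E)%E.
Proof.
move=> p1 e1; set q := 1 - p.
have q0 : 0 < q by rewrite subr_gt0.
have fE w : 1 / (1 - w) `^ p = (1 - w) `^ (q - 1).
  by rewrite /q addrAC subrr add0r powRN div1r.
have mf : measurable_fun `[e, 1[ (EFin \o fun w : R => 1 / (1 - w) `^ p).
  by apply/measurable_EFinP; apply: measurable_funS (measurable_inv_onem_powR p).
rewrite -integral_itv_bndo_bndc //.
under eq_integral do rewrite fE.
have cf x : x < 1 -> {for x, continuous (fun w : R => (1 - w) `^ (q - 1))}.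
  move=> x1; have [+ _] := is_derive_onem_powR (q - 1) x x1.
  by move/derivable1_diffP/differentiable_continuous.
have -> : (1 - e) `^ q / q = - q^-1 * (1 - 1) `^ q - - q^-1 * (1 - e) `^ q.
  by rewrite subrr powR0 ?gt_eqF// mulr0 sub0r mulNr opprK mulrC.
apply: (ge0_continuous_FTC2co _ (fun w => - q^-1 * (1 - w) `^ q)) => //.
- by move=> x _; rewrite powR_ge0.
- by move=> x /[!in_itv] /andP[_ x1]; exact: cf.
- move=> x /[!in_itv] /andP[_ x1].
  apply: (is_derive_eq (f' := - q^-1 *: - (q * (1 - x) `^ (q - 1)))).
    exact/is_deriveZ/is_derive_onem_powR.
  by rewrite /GRing.scale/= mulrNN mulrA mulVf ?mul1r // gt_eqF.
- apply/cvg_at_leftP => u [u1 ucv].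
  have u0 : (1 - u n) `^ q @[n --> \oo] --> 0.
    apply: ((cvg_at_rightP _ _ _).1 (powR_cvg0 q0) (fun n => 1 - u n)).
    split; first by move=> n; rewrite subr_gt0.
    by rewrite -(subrr 1); apply: cvgB; [exact: cvg_cst | exact: ucv].
  rewrite subrr powR0 ?gt_eqF// mulr0.
  by have := cvgM (cvg_cst (- q^-1)) u0; rewrite mulr0; apply.
Qed.

Definition Spow (p e : R) (w : R) : R :=
  if w < e then - (1 / Num.sqrt w) else 1 / (1 - w) `^ p.

Definition Spow_mean (p e : R) : R := (1 - e) `^ (1 - p) / (1 - p) - 2 * Num.sqrt e.

Lemma Spow_integral (p e : R) : p < 1 -> 0 < e -> e < 1 ->
  mu.-integrable `[0%R, 1%R] (EFin \o Spow p e) /\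
  (\int[mu]_(x in `[0%R, 1%R]) (Spow p e x)%:E = (Spow_mean p e)%:E)%E.
Proof.
move=> p1 e0 e1.
have U : [set` `[0%R, 1%R]] = [set` `[0%R, e[] `|` [set` `[e, 1%R]] :> set R.
  by apply: itv_bndbnd_setU; rewrite bnd_simp ltW.
have D : [disjoint [set` `[0%R, e[] & [set` `[e, 1%R]]] :> Prop.
  by apply/disj_setPS => x [] /=; rewrite !in_itv/= => /andP[_ xe] /andP[ex _]; lra.
have Sl x : [set` `[0%R, e[] x -> Spow p e x = - (1 / Num.sqrt x).
  by rewrite /= in_itv/= /Spow => /andP[_ ->].
have Sr x : [set` `[e, 1%R]] x -> Spow p e x = 1 / (1 - x) `^ p.
  by rewrite /= in_itv/= /Spow => /andP[ex _]; rewrite ltNge ex.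
have mS : measurable_fun [set` (`[0%R, 1%R] : interval R)] (EFin \o Spow p e).
  rewrite U; apply/measurable_funU => //; split; apply/measurable_EFinP.
  - apply: (eq_measurable_fun (fun w : R => - (1 / Num.sqrt w))).
      by move=> x /set_mem /Sl.
    apply: measurable_funN; apply: measurable_funS measurable_inv_sqrt => //.
    by apply: subset_itv; rewrite bnd_simp.
  - apply: (eq_measurable_fun (fun w : R => 1 / (1 - w) `^ p)).
      by move=> x /set_mem /Sr.
    exact: measurable_funS (measurable_inv_onem_powR p).
have Il : (\int[mu]_(x in `[0%R, e[) (Spow p e x)%:E = (- (2 * Num.sqrt e))%:E)%E.
  transitivity (\int[mu]_(x in `[0%R, e[) - (1 / Num.sqrt x)%:E)%E.
    by apply: eq_integral => x /set_mem /Sl ->.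
  by rewrite integral_ge0N ?integral_inv_sqrt.
have Ir : (\int[mu]_(x in `[e, 1%R]) (Spow p e x)%:E
            = ((1 - e) `^ (1 - p) / (1 - p))%:E)%E.
  by rewrite -integral_inv_onem_powR//; apply: eq_integral => x /set_mem /Sr ->.
split.
- apply/integrableP; split=> //; rewrite U ge0_integral_setU//; last first.
    by apply: measurableT_comp => //; rewrite -U.
  have -> : (\int[mu]_(x in `[0%R, e[) `|(Spow p e x)%:E| = (2 * Num.sqrt e)%:E)%E.
    rewrite -integral_inv_sqrt//; apply: eq_integral => x /set_mem /Sl ->.
    by rewrite /= normrN ger0_norm// divr_ge0 ?sqrtr_ge0.
  have -> : (\int[mu]_(x in `[e, 1%R]) `|(Spow p e x)%:E|
              = ((1 - e) `^ (1 - p) / (1 - p))%:E)%E.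
    rewrite -Ir; apply: eq_integral => x /set_mem /Sr ->.
    by rewrite /= ger0_norm// divr_ge0 ?powR_ge0.
  by rewrite -EFinD ltry.
- by rewrite U integral_setU -?U// Il Ir -EFinD addrC.
Qed.

Lemma Spow_mean_continuous (p x : R) : x < 1 -> {for x, continuous (Spow_mean p)}.
Proof.
move=> x1; apply: cvgB; last first.
  by apply: cvgM; [exact: cvg_cst | exact: sqrt_continuous].
apply: cvgM; last exact: cvg_cst.
have [+ _] := is_derive_onem_powR (1 - p) x x1.
by move/derivable1_diffP/differentiable_continuous.
Qed.

Lemma Spow_mean_root (p : R) : 0 < p <= 2^-1 ->
  exists e, [/\ 0 < e, e < 1, Spow_mean p e = 1 & e <= p].
Proof.
move=> /andP[p0 p2]; rewrite /Spow_mean; set q := 1 - p.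
have q_half : 2^-1 <= q by rewrite /q; lra.
have q1 : q < 1 by rewrite /q; lra.
have q0 : 0 < q by lra.
have powR_le1 a : 0 < a <= 1 -> a `^ q <= 1.
  by move=> a01; rewrite -(powRr0 a) ger_powR// ltW.
have mean0 : 1 < Spow_mean p 0.
  by rewrite /Spow_mean -/q sqrtr0 mulr0 !subr0 powR1 div1r invf_gt1.
have mean9 : Spow_mean p (9/16) <= 1.
  rewrite /Spow_mean -/q.
  have -> : Num.sqrt (9/16) = 3/4 :> R.
    by rewrite (_ : 9/16 = (3/4)^+2) ?sqrtr_sqr ?ger0_norm//; field.
  have A1 : (1 - 9/16) `^ q <= 1 :> R by apply: powR_le1; lra.
  have : (1 - 9/16) `^ q / q <= 2.
    apply: (le_trans (ler_wpM2r _ A1)); first by rewrite invr_ge0 ltW.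
    by rewrite mul1r -(ler_pM2l q0) mulfV ?gt_eqF//; lra.
  lra.
have [c] : exists2 c, c \in `[0, 9/16] & Spow_mean p c = 1.
  apply: IVT; first by rewrite divr_ge0.
    apply: continuous_in_subspaceT => x; rewrite inE/= in_itv/= => /andP[_ x916].
    by apply: Spow_mean_continuous; lra.
  by rewrite ge_min le_max (ltW mean0) mean9 orbT.
rewrite in_itv/= => /andP[c0 c916] gc.
have c_gt0 : 0 < c.
  rewrite lt_neqAle c0 andbT; apply/eqP => c_eq0.
  by move: mean0; rewrite c_eq0 gc ltxx.
have c1 : c < 1 by lra.
exists c; split=> //; move: gc; rewrite /Spow_mean -/q.
have A1 : (1 - c) `^ q <= 1 by apply: powR_le1; lra.
have S0 : 0 <= Num.sqrt c by exact: sqrtr_ge0.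
set A := _ `^ q in A1 *; set S := Num.sqrt c in S0 *.
move=> /eqP; rewrite subr_eq => /eqP AE.
have {}AE : A = q * (1 + 2 * S) by rewrite -AE mulrC divfK ?gt_eqF.
rewrite -(sqr_sqrtr (ltW c_gt0)) -/S; rewrite /q in AE q_half; nra.
Qed.
End blowup_integrals.

Theorem lemma6p1 (R : realType) :
  exists eps : nat -> R,
    (forall n : nat, (0 < n)%N ->
       [/\ 0 < eps n, eps n < 1,
           (@lebesgue_measure R).-integrable `[0, 1] (EFin \o S1 n (eps n)) &
           (\int[@lebesgue_measure R]_(w in `[0%R, 1%R] : set R) (S1 n (eps n) w)%:E = 1%:E)%E])
    /\ eps @ \oo --> (0 : R^o).
Proof.
have root n : exists e : R, 0 <= e <= harmonic n /\ ((0 < n)%N ->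
    [/\ 0 < e, e < 1,
        (@lebesgue_measure R).-integrable `[0, 1] (EFin \o S1 n e) &
        (\int[@lebesgue_measure R]_(w in `[0%R, 1%R] : set R) (S1 n e w)%:E = 1%:E)%E]).
  have [->|n0] := posnP n; first by exists 0; rewrite lexx harmonic_ge0.
  pose p : R := 1 / (n%:R + 1).
  have pE : p = harmonic n by rewrite /p div1r natr1.
  have p_half : 0 < p <= 2^-1.
    by rewrite pE harmonic_gt0 /= lef_pV2 ?posrE// ler_nat ltnS.
  have [e [e0 e1 eE ep]] := Spow_mean_root p p_half.
  have p1 : p < 1 by case/andP: p_half => _; lra.
  have [Sint SE] := Spow_integral p e p1 e0 e1.
  exists e; rewrite ltW// -pE ep; split=> // _; split=> //.
  by rewrite SE eE.
have [eps epsP] := choice root.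
exists eps; split=> [n n0|]; first by have [_ /(_ n0)] := epsP n.
apply: (squeeze_cvgr _ (cvg_cst 0) cvg_harmonic).
by near=> n; have [] := epsP n.
Unshelve. all: end_near.
Qed.
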